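(* Let $0\to\mathfrak{r}\to\mathfrak{f}\xrightarrow{\rho}\mathfrak{g}\to0$ be a free presentation of a Leibniz algebra $\mathfrak{g}$ and let $0\to\mathfrak{m}\to\mathfrak{p}\xrightarrow{\psi}\mathfrak{q}\to0$ be a $\mathrm{Lie}$-central extension of a Leibniz algebra $\mathfrak{q}$. Then for each homomorphism $\alpha:\mathfrak{g}\to\mathfrak{q}$ there exists a homomorphism $\beta:\mathfrak{f}/[\mathfrak{f},\mathfrak{r}]_{\mathrm{Lie}}\to\mathfrak{p}$ such that $\beta(\mathfrak{r}/[\mathfrak{f},\mathfrak{r}]_{\mathrm{Lie}})\subseteq\mathfrak{m}$ and $\psi\circ\beta=\alpha\circ\overline{\rho}$, where $\overline{\rho}:\mathfrak{f}/[\mathfrak{f},\mathfrak{r}]_{\mathrm{Lie}}\to\mathfrak{g}$ is the epimorphism induced by $\rho$.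
   Context: Fix a field $\mathbb{K}$ with $\frac12\in\mathbb{K}$. A Leibniz algebra is a $\mathbb{K}$-vector space with a bilinear bracket satisfying $[x,[y,z]]=[[x,y],z]-[[x,z],y]$. For two-sided ideals $\mathfrak{m},\mathfrak{n}$, $[\mathfrak{m},\mathfrak{n}]_{\mathrm{Lie}}$ is the subspace spanned by all $[m,n]+[n,m]$. $Z_{\mathrm{Lie}}(\mathfrak{p})=\{z:[x,z]+[z,x]=0\ \forall x\in\mathfrak{p}\}$; a short exact sequence $0\to\mathfrak{m}\to\mathfrak{p}\to\mathfrak{q}\to0$ is a $\mathrm{Lie}$-central extension if $\mathfrak{m}\subseteq Z_{\mathrm{Lie}}(\mathfrak{p})$. A free presentation of $\mathfrak{g}$ is a short exact sequence $0\to\mathfrak{r}\to\mathfrak{f}\to\mathfrak{g}\to0$ with $\mathfrak{f}$ a free Leibniz algebra. *)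

From HB Require Import structures.
From mathcomp Require Import all_boot all_order all_algebra.
Set Implicit Arguments. Unset Strict Implicit. Unset Printing Implicit Defensive.
Import GRing.Theory.
Local Open Scope ring_scope.

Record leibniz (K : fieldType) := Leibniz {
  lcar :> lmodType K;
  lbr : lcar -> lcar -> lcar;
  lbr_linl : forall (a : K) (x y z : lcar), lbr (a *: x + y) z = a *: lbr x z + lbr y z;
  lbr_linr : forall (a : K) (x y z : lcar), lbr z (a *: x + y) = a *: lbr z x + lbr z y;
  lbr_leibniz : forall x y z : lcar, lbr x (lbr y z) = lbr (lbr x y) z - lbr (lbr x z) y
}.

Definition lhom (K : fieldType) (L1 L2 : leibniz K) (h : L1 -> L2) : Prop :=
  (forall (a : K) (x y : L1), h (a *: x + y) = a *: h x + h y) /\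
  (forall x y : L1, h (lbr x y) = lbr (h x) (h y)).

Definition free_leibniz (K : fieldType) (F : leibniz K) : Prop :=
  exists (X : Type) (i : X -> F),
    forall (L : leibniz K) (g : X -> L),
      exists h : F -> L, [/\ lhom h, (forall x, h (i x) = g x) &
        (forall h' : F -> L, lhom h' -> (forall x, h' (i x) = g x) ->
           forall y, h' y = h y)].

(* [M, N]_Lie : the subspace spanned by all [m,n] + [n,m], m in M, n in N. *)
Definition lie_comm (K : fieldType) (L : leibniz K) (M N : L -> Prop) (v : L) : Prop :=
  exists s : seq (K * (L * L)),
    (forall t, t \in s -> M t.2.1 /\ N t.2.2) /\
    v = \sum_(t <- s) t.1 *: (lbr t.2.1 t.2.2 + lbr t.2.2 t.2.1).

Definition Z_Lie (K : fieldType) (L : leibniz K) (z : L) : Prop :=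
  forall x : L, lbr x z + lbr z x = 0.

From mathcomp Require Import all_boot all_order all_algebra.
From Stdlib Require Import ClassicalEpsilon.
Local Open Scope ring_scope.
Import GRing.Theory.

(* The homomorphism f -> q given by alpha o rho lifts along the surjection psi
   because f is free.  The lift h sends r = ker rho into ker psi, which is
   Lie-central in p, so h kills every [x, r] + [r, x] and hence factors through
   f / [f, r]_Lie. *)

Lemma surj_section {A B : Type} {s : A -> B} :
  (forall y, exists x, s x = y) -> exists sec : B -> A, forall y, s (sec y) = y.
Proof.
move=> s_surj.
exists (fun y => proj1_sig (constructive_indefinite_description _ (s_surj y))).
by move=> y; case: constructive_indefinite_description.
Qed.

Section LeibnizHomomorphisms.

Context {K : fieldType}.
Implicit Types A B C : leibniz K.

Lemma lhomD {A B} {h : A -> B} : lhom h -> forall x y, h (x + y) = h x + h y.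
Proof. by move=> [hl _] x y; have := hl 1 x y; rewrite !scale1r. Qed.

Lemma lhomB {A B} {h : A -> B} : lhom h -> forall x y, h (x - y) = h x - h y.
Proof.
by move=> [hl _] x y; have := hl (-1) y x; rewrite !scaleN1r addrC => ->; rewrite addrC.
Qed.

Lemma lhom0 {A B} {h : A -> B} : lhom h -> h 0 = 0.
Proof. by move=> hh; rewrite -(subrr 0) lhomB // subrr. Qed.

Lemma lhom_comp {A B C} {h : A -> B} {k : B -> C} :
  lhom h -> lhom k -> lhom (k \o h).
Proof.
move=> [hl hb] [kl kb]; split=> [a x y | x y] /=; first by rewrite hl kl.
by rewrite hb kb.
Qed.

Lemma free_leibniz_lift {A B C} {psi : B -> C} {gamma : A -> C} :
  free_leibniz A -> lhom psi -> (forall y, exists x, psi x = y) -> lhom gamma ->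
  exists h : A -> B, lhom h /\ forall x, psi (h x) = gamma x.
Proof.
move=> [X [i univ]] hpsi psi_surj hgamma.
have [sec secK] := surj_section psi_surj.
have [h [hh hi _]] := univ B (fun x => sec (gamma (i x))).
have [c [_ _ c_uniq]] := univ C (fun x => gamma (i x)).
exists h; split=> // x.
(* Both psi \o h and gamma extend gamma \o i, so by uniqueness both equal c. *)
have psih_gen x' : psi (h (i x')) = gamma (i x') by rewrite hi secK.
by rewrite [LHS](c_uniq (psi \o h) (lhom_comp hh hpsi) psih_gen) (c_uniq _ hgamma).
Qed.

Lemma lhom_lie_comm_eq0 {A B} {h : A -> B} {M N : A -> Prop} :
  lhom h -> (forall n, N n -> Z_Lie (h n)) -> forall x, lie_comm M N x -> h x = 0.
Proof.
move=> hh hN x [s [sMN ->]].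
elim: s sMN => [|t s IH] sMN; first by rewrite big_nil (lhom0 hh).
rewrite big_cons (proj1 hh) IH => [|u us]; last by apply: sMN; rewrite in_cons us orbT.
have [_ Nt] := sMN t (mem_head _ _).
by rewrite (lhomD hh) !(proj2 hh) (hN _ Nt) scaler0 addr0.
Qed.

Lemma lhom_factor {A B C} {s : A -> B} {h : A -> C} :
  lhom s -> (forall y, exists x, s x = y) -> lhom h ->
  (forall x, s x = 0 -> h x = 0) ->
  exists beta : B -> C, lhom beta /\ forall x, beta (s x) = h x.
Proof.
move=> hs s_surj hh hker.
have [sec secK] := surj_section s_surj.
have h_wd x y : s x = s y -> h x = h y.
  move=> sxy; apply/eqP; rewrite -subr_eq0 -(lhomB hh); apply/eqP/hker.
  by rewrite (lhomB hs) sxy subrr.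
exists (h \o sec); split=> [|x]; last by apply: h_wd; rewrite secK.
split=> [a x y | x y] /=.
  by rewrite -(proj1 hh); apply: h_wd; rewrite (proj1 hs) !secK.
by rewrite -(proj2 hh); apply: h_wd; rewrite (proj2 hs) !secK.
Qed.

End LeibnizHomomorphisms.

Theorem mainTheorem11 (K : fieldType) (hK : (2%:R : K) != 0)
  (* free presentation 0 -> r -> f -> g -> 0, with r = ker rho *)
  (f g : leibniz K) (rho : f -> g)
  (hfree : free_leibniz f) (hrho : lhom rho) (hrho_surj : forall y : g, exists x, rho x = y)
  (* Lie-central extension 0 -> m -> p -> q -> 0, with m = ker psi *)
  (p q : leibniz K) (psi : p -> q)
  (hpsi : lhom psi) (hpsi_surj : forall y : q, exists x, psi x = y)
  (hcentral : forall z : p, psi z = 0 -> Z_Lie z)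
  (alpha : g -> q) (halpha : lhom alpha)
  (* Q = f / [f, r]_Lie with projection pi *)
  (Q : leibniz K) (pi : f -> Q) (hpi : lhom pi) (hpi_surj : forall y : Q, exists x, pi x = y)
  (hpi_ker : forall x : f, pi x = 0 <-> lie_comm (fun _ => True) (fun r => rho r = 0) x)
  (* rhobar : Q -> g induced by rho *)
  (rhobar : Q -> g) (hrhobar : lhom rhobar) (hrhobar_pi : forall x : f, rhobar (pi x) = rho x) :
  exists beta : Q -> p,
    [/\ lhom beta,
        (forall x : f, rho x = 0 -> psi (beta (pi x)) = 0) &
        (forall y : Q, psi (beta y) = alpha (rhobar y))].
Proof.
have [h [hh psihE]] :=
  free_leibniz_lift hfree hpsi hpsi_surj (lhom_comp hrho halpha).
have h_ker_pi x : pi x = 0 -> h x = 0.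
  move/hpi_ker; apply: lhom_lie_comm_eq0 => // r rho_r0.
  by apply: hcentral; rewrite psihE /= rho_r0 (lhom0 halpha).
have [beta [hbeta betaE]] := lhom_factor hpi hpi_surj hh h_ker_pi.
exists beta; split=> // [x rho_x0 | y].
  by rewrite betaE psihE /= rho_x0 (lhom0 halpha).
have [x <-] := hpi_surj y.
by rewrite betaE psihE hrhobar_pi.
Qed.
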